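(* Let $G$ be a digraph that is not strongly connected, and suppose that $G$ has exactly one strongly connected subdigraph with at least one arc, and that this subdigraph is a directed cycle. Then the sequence of inner diameters $d(G),d(LG),d(L^2G),\dots$ is eventually periodic: there exist $k_0\ge0$ and $p\ge1$ such that $d(L^{k+p}G)=d(L^kG)$ for all $k\ge k_0$.
   Context: Digraphs are finite and may have loops and multiple arcs. The line digraph $LG$ has as vertex set the set of arcs of $G$, with an arc from $e$ to $f$ whenever the head of $e$ equals the tail of $f$; $L^0G=G$, $L^kG=L(L^{k-1}G)$. The inner diameter is $d(G)=\max\{\mathrm{dist}_G(u,v): \mathrm{dist}_G(u,v)<\infty\}$, where $\mathrm{dist}_G(u,v)$ is the length of a shortest directed walk from $u$ to $v$ ($\mathrm{dist}_G(u,u)=0$). A directed cycle is a digraph with vertices $v_0,\dots,v_{n-1}$ ($n\ge1$) and exactly the arcs $(v_i,v_{i+1\bmod n})$. *)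

From mathcomp Require Import all_boot.
Set Implicit Arguments. Unset Strict Implicit. Unset Printing Implicit Defensive.

Record digraph := Digraph {
  dvert : finType;
  darc : finType;
  dtail : darc -> dvert;
  dhead : darc -> dvert }.

Definition line_arc (G : digraph) : finType :=
  {p : darc G * darc G | dhead p.1 == dtail p.2}.

Definition line (G : digraph) : digraph :=
  @Digraph (darc G) (line_arc G)
    (fun q => (val q).1) (fun q => (val q).2).

Fixpoint iter_line (k : nat) (G : digraph) : digraph :=
  match k with 0 => G | k'.+1 => line (iter_line k' G) end.

Definition adj_in (G : digraph) (B : {set darc G}) : rel (dvert G) :=
  fun x y => [exists a in B, (dtail a == x) && (dhead a == y)].

Definition adj (G : digraph) : rel (dvert G) := adj_in [set: darc G].

Fixpoint reach (G : digraph) (n : nat) (u : dvert G) : {set dvert G} :=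
  match n with
  | 0 => [set u]
  | n'.+1 => [set y | [exists x in reach n' u, adj x y]]
  end.

(* dist u v = length of a shortest directed walk from u to v; meaningful when
   v is reachable from u (a shortest walk then has length < #|V|). *)
Definition dist (G : digraph) (u v : dvert G) : nat :=
  find (fun n => v \in reach n u) (iota 0 #|dvert G|).

Definition inner_diam (G : digraph) : nat :=
  \max_(u : dvert G) \max_(v : dvert G | connect (@adj G) u v) dist u v.

Definition strongly_connected (G : digraph) : Prop :=
  forall u v : dvert G, connect (@adj G) u v.

Definition subdigraph (G : digraph) (S : {set dvert G}) (B : {set darc G}) : Prop :=
  forall a, a \in B -> (dtail a \in S) && (dhead a \in S).

Definition sub_strongly_connected (G : digraph) (S : {set dvert G})
  (B : {set darc G}) : Prop :=
  forall x y, x \in S -> y \in S -> connect (adj_in B) x y.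

Definition is_dicycle (G : digraph) (S : {set dvert G}) (B : {set darc G}) : Prop :=
  exists (vs : seq (dvert G)) (es : seq (darc G)),
    [/\ 0 < size vs, size es = size vs, uniq vs & uniq es] /\
    [/\ S = [set x in vs], B = [set a in es] &
        forall i (x0 : dvert G) (a0 : darc G), i < size vs ->
          dtail (nth a0 es i) = nth x0 vs i /\
          dhead (nth a0 es i) = nth x0 vs (i.+1 %% size vs)].

Definition nontriv_scc_sub (G : digraph) (S : {set dvert G}) (B : {set darc G}) : Prop :=
  [/\ subdigraph S B, sub_strongly_connected S B & B != set0].

From mathcomp Require Import all_boot zify.
Set Implicit Arguments. Unset Strict Implicit. Unset Printing Implicit Defensive.

(* Inner diameter is an isomorphism invariant and [line] preserves isomorphism,
   so if the orders of the iterated line digraphs [L^k G] are bounded, two of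
   them are isomorphic (finitely many digraphs of bounded size up to
   isomorphism) and the sequence of diameters is periodic from there on.
   The vertices of [L^(k+1) G] are the walks of [k+1] arcs in [G].  Every closed
   walk of [G] stays on its unique cycle [C], so a walk consists of distinct
   arcs off [C], then a stretch along [C] determined by its first arc and its
   length, then again distinct arcs off [C]; hence there are boundedly many
   walks of any given length. *)

Record diso (H H' : digraph) := DIso {
  diso_vert : dvert H -> dvert H';
  diso_arc : darc H -> darc H';
  diso_vert_bij : bijective diso_vert;
  diso_arc_bij : bijective diso_arc;
  diso_tail : forall a, dtail (diso_arc a) = diso_vert (dtail a);
  diso_head : forall a, dhead (diso_arc a) = diso_vert (dhead a) }.

Lemma adj_arc (G : digraph) (a : darc G) : adj (dtail a) (dhead a).
Proof. by apply/existsP; exists a; rewrite in_setT !eqxx. Qed.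

Lemma adjP (G : digraph) (x y : dvert G) :
  reflect (exists a, dtail a = x /\ dhead a = y) (adj x y).
Proof.
apply: (iffP existsP) => [[a /andP[_ /andP[/eqP <- /eqP <-]]]|[a [<- <-]]].
  by exists a.
by exists a; rewrite in_setT !eqxx.
Qed.

Lemma homo_connect (T T' : finType) (e : rel T) (e' : rel T') (f : T -> T') :
  {homo f : x y / e x y >-> e' x y} -> {homo f : x y / connect e x y >-> connect e' x y}.
Proof.
move=> fe x _ /connectP[p xp ->]; apply/connectP; exists (map f p).
  exact: homo_path xp.
by rewrite last_map.
Qed.

Lemma connect_bij (T T' : finType) (e : rel T) (e' : rel T') (f : T -> T') :
  bijective f -> (forall x y, e' (f x) (f y) = e x y) ->
  forall x y, connect e' (f x) (f y) = connect e x y.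
Proof.
move=> [g fK gK] fe x y; apply/idP/idP => [|]; last by apply: homo_connect => u v; rewrite fe.
have ge u v : e' u v -> e (g u) (g v) by rewrite -fe !gK.
by move/(homo_connect ge); rewrite !fK.
Qed.

Section IsoInvariance.
Variables (H H' : digraph) (i : diso H H').
Local Notation f := (diso_vert i).

Lemma diso_vert_inj : injective f.
Proof. exact: bij_inj (diso_vert_bij i). Qed.

Lemma adj_diso u v : adj (f u) (f v) = adj u v.
Proof.
apply/adjP/adjP => [[a' [ta' ha']]|[a [<- <-]]]; last first.
  by exists (diso_arc i a); rewrite diso_tail diso_head.
have [g fK gK] := diso_arc_bij i; exists (g a').
by split; apply: diso_vert_inj; rewrite -?diso_tail -?diso_head gK.
Qed.

Lemma reach_diso n u v : (f v \in reach n (f u)) = (v \in reach n u).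
Proof.
elim: n v => [|n IH] v /=; first by rewrite !in_set1 (inj_eq diso_vert_inj).
have [g fK gK] := diso_vert_bij i.
rewrite !inE; apply/existsP/existsP => [[x /andP[xr xv]]|[x /andP[xr xv]]].
  by exists (g x); rewrite -IH -adj_diso gK xr xv.
by exists (f x); rewrite IH adj_diso xr xv.
Qed.

Lemma dist_diso u v : dist (f u) (f v) = dist u v.
Proof.
rewrite /dist (bij_eq_card (diso_vert_bij i)).
by apply: eq_find => n; rewrite reach_diso.
Qed.

Lemma inner_diam_diso : inner_diam H' = inner_diam H.
Proof.
rewrite /inner_diam (reindex f); last exact/onW_bij/diso_vert_bij.
apply: eq_bigr => u _.
rewrite (reindex f); last exact/onW_bij/diso_vert_bij.
apply: eq_big => [v|v _]; last exact: dist_diso.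
exact: (connect_bij (diso_vert_bij i) adj_diso).
Qed.

End IsoInvariance.

Section LineIso.
Variables (H H' : digraph) (i : diso H H').

Lemma line_diso_arc_subproof (q : line_arc H) :
  dhead (diso_arc i (val q).1) == dtail (diso_arc i (val q).2).
Proof. by rewrite diso_head diso_tail (eqP (valP q)). Qed.

Definition line_diso_arc (q : line_arc H) : line_arc H' :=
  exist _ (diso_arc i (val q).1, diso_arc i (val q).2) (line_diso_arc_subproof q).

Lemma line_diso_arc_bij : bijective line_diso_arc.
Proof.
have [g fK gK] := diso_arc_bij i.
have inv_subproof (q : line_arc H') : dhead (g (val q).1) == dtail (g (val q).2).
  by rewrite -(inj_eq (@diso_vert_inj _ _ i)) -diso_head -diso_tail !gK (valP q).
exists (fun q => exist _ (g (val q).1, g (val q).2) (inv_subproof q)).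
  by move=> [[a b] ab]; apply: val_inj; rewrite /= !fK.
by move=> [[a b] ab]; apply: val_inj; rewrite /= !gK.
Qed.

Definition line_diso : diso (line H) (line H') :=
  @DIso (line H) (line H') (diso_arc i) line_diso_arc
    (diso_arc_bij i) line_diso_arc_bij (fun=> erefl) (fun=> erefl).

End LineIso.

Lemma diso_iter_line (G : digraph) k k' j :
  diso (iter_line k G) (iter_line k' G) -> diso (iter_line (k + j) G) (iter_line (k' + j) G).
Proof. by move=> i; elim: j => [|j IH]; rewrite ?addn0 // !addnS; apply: line_diso. Qed.

Fixpoint seqs_upto (T : eqType) (n : nat) (s : seq T) : seq (seq T) :=
  if n is n'.+1 then [::] :: [seq x :: l | x <- s, l <- seqs_upto n' s] else [:: [::]].

Lemma mem_seqs_upto (T : eqType) (s l : seq T) n :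
  size l <= n -> all (mem s) l -> l \in seqs_upto n s.
Proof.
elim: n l => [|n IH] [|x l] //= ln /andP[xs ls].
by rewrite in_cons; apply/orP; right; apply: allpairs_f => //; apply: IH.
Qed.

Lemma pigeonhole (T : eqType) (f : nat -> T) (s : seq T) :
  (forall k, f k \in s) -> exists i j, i < j /\ f i = f j.
Proof.
move=> fs; have: ~~ uniq (map f (iota 0 (size s).+1)).
  apply/negP => /uniq_leq_size le_s.
  have /le_s : {subset map f (iota 0 (size s).+1) <= s} by move=> _ /mapP[k _ ->].
  by rewrite size_map size_iota ltnn.
case/(uniqPn (f 0)) => i [j [ij]]; rewrite size_map size_iota => jn.
rewrite !(nth_map 0) ?size_iota ?(ltn_trans ij) // !nth_iota ?(ltn_trans ij) //.
by exists i, j.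
Qed.

Definition rank_cast (T T' : finType) (e : #|T| = #|T'|) (x : T) : T' :=
  enum_val (cast_ord e (enum_rank x)).

Lemma rank_cast_bij (T T' : finType) (e : #|T| = #|T'|) : bijective (rank_cast e).
Proof.
by exists (rank_cast (esym e)) => x; rewrite /rank_cast enum_valK ?cast_ordK ?cast_ordKV enum_rankK.
Qed.

Lemma rank_cast_eq (T T' : finType) (e : #|T| = #|T'|) (x : T) (y : T') :
  enum_rank y = enum_rank x :> nat -> y = rank_cast e x.
Proof. by move=> yx; apply: enum_rank_inj; apply: val_inj; rewrite /rank_cast enum_valK. Qed.

Definition digraph_code (H : digraph) : nat * seq (nat * nat) :=
  (#|dvert H|,
   [seq (nat_of_ord (enum_rank (dtail a)), nat_of_ord (enum_rank (dhead a))) | a <- enum (darc H)]).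

Lemma digraph_code_diso (H H' : digraph) : digraph_code H = digraph_code H' -> diso H H'.
Proof.
case=> eV E.
have eA : #|darc H| = #|darc H'| by rewrite !cardT; move/(congr1 size): E; rewrite !size_map.
have ends a : (nat_of_ord (enum_rank (dtail (rank_cast eA a))),
               nat_of_ord (enum_rank (dhead (rank_cast eA a))))
            = (nat_of_ord (enum_rank (dtail a)), nat_of_ord (enum_rank (dhead a))).
  have a_enum : enum_rank a < size (enum (darc H)) by rewrite -cardT.
  have a_enum' : enum_rank a < size (enum (darc H')) by rewrite -cardT -eA.
  have nth_cast : nth (rank_cast eA a) (enum (darc H')) (enum_rank a) = rank_cast eA a.
    by rewrite {2}/rank_cast (enum_val_nth (rank_cast eA a)).
  move/(congr1 (nth (0, 0) ^~ (enum_rank a))): E.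
  by rewrite (nth_map a) // nth_enum_rank (nth_map (rank_cast eA a)) // nth_cast => ->.
by apply: (@DIso H H' (rank_cast eV) (rank_cast eA) (rank_cast_bij eV) (rank_cast_bij eA))
  => a; apply: rank_cast_eq; case: (ends a).
Qed.

Definition digraph_codes (N : nat) : seq (nat * seq (nat * nat)) :=
  [seq (n, l) | n <- iota 0 N.+1,
     l <- seqs_upto N [seq (x, y) | x <- iota 0 N, y <- iota 0 N]].

Lemma digraph_code_mem N (H : digraph) :
  #|dvert H| <= N -> #|darc H| <= N -> digraph_code H \in digraph_codes N.
Proof.
move=> VN AN; apply: allpairs_f; first by rewrite mem_iota.
apply: mem_seqs_upto; first by rewrite size_map (leq_trans _ AN) // cardT.
apply/allP => _ /mapP[a _ ->].
by apply: allpairs_f; rewrite mem_iota /= (leq_trans (ltn_ord _) VN).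
Qed.

Lemma iter_line_diam_periodic (G : digraph) N :
  (forall k, #|dvert (iter_line k G)| <= N) ->
  exists k0 p, 0 < p /\
    forall k, k0 <= k -> inner_diam (iter_line (k + p) G) = inner_diam (iter_line k G).
Proof.
move=> VN.
have [i [j [ij Eij]]] := pigeonhole (fun k => digraph_code_mem (VN k) (VN k.+1)).
exists i, (j - i); split=> [|k ik]; first by rewrite subn_gt0.
have := inner_diam_diso (diso_iter_line (k - i) (digraph_code_diso Eij)).
by rewrite subnKC // (_ : j + (k - i) = k + (j - i)) //; lia.
Qed.

Section Walks.
Variable G : digraph.

Definition consec (a b : darc G) : bool := dhead a == dtail b.

Fixpoint first_arc k : dvert (iter_line k.+1 G) -> darc G :=
  match k return dvert (iter_line k.+1 G) -> darc G with
  | 0 => fun a => a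
  | k'.+1 => fun q => @first_arc k' (val q).1
  end.

Fixpoint walk_of k : dvert (iter_line k.+1 G) -> seq (darc G) :=
  match k return dvert (iter_line k.+1 G) -> seq (darc G) with
  | 0 => fun a => [:: a]
  | k'.+1 => fun q => @first_arc k' (val q).1 :: @walk_of k' (val q).2
  end.

Arguments first_arc : clear implicits.
Arguments walk_of : clear implicits.

Lemma size_walk_of k v : size (walk_of k v) = k.+1.
Proof. by elim: k v => [|k IH] v //=; rewrite IH. Qed.

Lemma walk_ofE k v : walk_of k v = first_arc k v :: behead (walk_of k v).
Proof. by case: k v. Qed.

Lemma consec_first_arc k (x : darc (iter_line k.+1 G)) :
  consec (first_arc k (dtail x)) (first_arc k (dhead x)).
Proof.
elim: k x => [|k IH] x; first exact: (valP x).
change (consec (first_arc k (dtail (val x).1)) (first_arc k (dtail (val x).2))).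
by rewrite -(eqP (valP x)); apply: IH.
Qed.

Lemma sorted_walk_of k v : sorted consec (walk_of k v).
Proof.
elim: k v => [|k IH] v //=.
by rewrite walk_ofE /=; move: (IH (val v).2); rewrite walk_ofE /= consec_first_arc => ->.
Qed.

Lemma walk_of_tail k (x : darc (iter_line k.+1 G)) :
  walk_of k (dtail x) = first_arc k (dtail x) :: take k (walk_of k (dhead x)).
Proof.
elim: k x => [|k IH] x //.
change (first_arc k (dtail (val x).1) :: walk_of k (dhead (val x).1) =
  first_arc k (dtail (val x).1) :: first_arc k (dtail (val x).2) ::
  take k (walk_of k (dhead (val x).2))).
by rewrite (eqP (valP x)) IH.
Qed.

Lemma walk_of_inj k : injective (walk_of k).
Proof.
elim: k => [|k IH] x y; first by case.
case=> E1 /IH E2.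
have /IH E12 : walk_of k (val x).1 = walk_of k (val y).1.
  have := walk_of_tail (x : darc (iter_line k.+1 G)).
  have := walk_of_tail (y : darc (iter_line k.+1 G)).
  by rewrite /= E2 E1 => -> ->.
by move: x y E12 E2 {E1} => [[? ?] ?] [[? ?] ?] /= E12 E2; apply: val_inj; rewrite /= E12 E2.
Qed.

Lemma walk_connect a b s :
  sorted consec (a :: s) -> b \in s -> connect (@adj G) (dhead a) (dtail b).
Proof.
elim: s a => [|c s IH] a //= /andP[/eqP ac cs].
rewrite in_cons => /orP[/eqP ->|bs]; first by rewrite ac connect0.
by rewrite ac (connect_trans (connect1 (adj_arc c))) // IH.
Qed.

End Walks.

Arguments consec {G}.
Arguments walk_of {G} k.

Section StrongComponent.
Variables (G : digraph) (u : dvert G).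

Definition scc_of : {set dvert G} := [set v | connect (@adj G) u v && connect (@adj G) v u].

Definition scc_arcs : {set darc G} :=
  [set a | (dtail a \in scc_of) && (dhead a \in scc_of)].

Lemma sub_strongly_connected_scc : sub_strongly_connected scc_of scc_arcs.
Proof.
have scc_path p x : x \in scc_of -> path (@adj G) x p -> last x p \in scc_of ->
    connect (adj_in scc_arcs) x (last x p).
  elim: p x => [|y p IH] x x_scc /=; first by rewrite connect0.
  case/andP=> xy yp lastp.
  have y_scc : y \in scc_of.
    move: x_scc lastp; rewrite !inE => /andP[ux _] /andP[_ lu].
    rewrite (connect_trans ux (connect1 xy)) (connect_trans _ lu) //.
    exact: path_connect yp _ (mem_last y p).
  apply: connect_trans (IH _ y_scc yp lastp); apply: connect1.
  have /adjP[a [ax ay]] := xy.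
  by apply/existsP; exists a; rewrite inE ax ay x_scc y_scc !eqxx.
move=> x z x_scc z_scc.
have /connectP[p xp zp] : connect (@adj G) x z.
  move: x_scc z_scc; rewrite !inE => /andP[_ xu] /andP[uz _].
  exact: connect_trans xu uz.
by rewrite zp in z_scc *; apply: scc_path.
Qed.

End StrongComponent.

Lemma closing_arc_in_scc (G : digraph) (a : darc G) :
  connect (@adj G) (dhead a) (dtail a) -> a \in scc_arcs (dtail a).
Proof.
by move=> ha; rewrite !inE connect0 ha (connect1 (adj_arc a)).
Qed.

Lemma closing_arc_scc (G : digraph) (a : darc G) :
  connect (@adj G) (dhead a) (dtail a) -> nontriv_scc_sub (scc_of (dtail a)) (scc_arcs (dtail a)).
Proof.
move=> ha; split; [by move=> b; rewrite inE | exact: sub_strongly_connected_scc |].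
by apply/set0Pn; exists a; apply: closing_arc_in_scc.
Qed.

Section Unicyclic.
Variables (G : digraph) (S : {set dvert G}) (B : {set darc G}).
Hypothesis S_B_scc : nontriv_scc_sub S B.
Hypothesis S_B_cycle : is_dicycle S B.
Hypothesis S_B_unique : forall S' B', nontriv_scc_sub S' B' -> S' = S /\ B' = B.

Lemma closing_arc_in_cycle a : connect (@adj G) (dhead a) (dtail a) -> a \in B.
Proof.
by move=> ha; have [_ <-] := S_B_unique (closing_arc_scc ha); apply: closing_arc_in_scc.
Qed.

Lemma cycle_tail_inj : {in B &, injective (@dtail G)}.
Proof.
case: S_B_cycle => vs [es [[_ size_es uniq_vs _] [_ -> ends]]] a a'.
rewrite !inE => a_es a'_es tail_aa'.
have tail_nth b : b \in es -> dtail b = nth (dtail a) vs (index b es).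
  move=> b_es; have lt : index b es < size vs by rewrite -size_es index_mem.
  by have [<- _] := ends _ (dtail a) b lt; rewrite nth_index.
have : index a es = index a' es.
  apply/eqP; rewrite -(nth_uniq (dtail a) _ _ uniq_vs) -?size_es ?index_mem //.
  by rewrite -!tail_nth ?tail_aa'.
by move/(congr1 (nth a es)); rewrite !nth_index.
Qed.

Lemma cycle_connect x z : x \in S -> z \in S -> connect (@adj G) x z.
Proof.
case: S_B_scc => _ S_conn _ xS zS; apply: connect_sub (S_conn _ _ xS zS).
by move=> u v /existsP[a /andP[_ /andP[/eqP <- /eqP <-]]]; apply/connect1/adj_arc.
Qed.

Lemma walk_exits_cycle x y r b :
  sorted consec (x :: y :: r) -> x \in B -> y \notin B -> b \in r -> b \notin B.
Proof.
case/andP=> /eqP xy yr xB yB br; apply: contra yB => bB; apply: closing_arc_in_cycle.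
have [B_sub _ _] := S_B_scc.
apply: connect_trans (walk_connect yr br) _; rewrite -xy.
by apply: cycle_connect; [case/andP: (B_sub _ bB) | case/andP: (B_sub _ xB)].
Qed.

Lemma filter_exit_cycle x y r : sorted consec (x :: y :: r) ->
  x \in B -> y \notin B -> filter [predC B] (y :: r) = y :: r.
Proof.
move=> xyr xB yB; apply/all_filterP; rewrite /= yB /=.
by apply/allP => b br; apply: walk_exits_cycle xyr xB yB br.
Qed.

Lemma next_in_cycleE x y r : sorted consec (x :: y :: r) -> x \in B ->
  (y \in B) = (size (filter [predC B] (y :: r)) < size (y :: r)).
Proof.
move=> xyr xB; have [yB | yB] := boolP (y \in B).
  by rewrite /= yB /= ltnS size_filter count_size.
by rewrite (filter_exit_cycle xyr) // ltnn.
Qed.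

Definition walk_code (w : seq (darc G)) :=
  (filter [predC B] w, find [in B] w, ohead (filter [in B] w)).

Lemma walk_code_inj w w' : sorted consec w -> sorted consec w' ->
  size w = size w' -> walk_code w = walk_code w' -> w = w'.
Proof.
elim: w w' => [|x w IH] [|x' w'] //= xw x'w' [size_ww'].
rewrite /walk_code /=.
have [xB | xB] := boolP (x \in B); have [x'B | x'B] := boolP (x' \in B) => //=.
  case=> filter_ww' xx'; subst x'; congr (_ :: _).
  move: w w' IH xw x'w' size_ww' filter_ww'
    => [|y r] [|y' r'] // IH xyr xyr' [size_rr'] filter_eq.
  have filter_rr' : filter [predC B] (y :: r) = filter [predC B] (y' :: r') := filter_eq.
  have yB_y'B : (y \in B) = (y' \in B).
    by rewrite (next_in_cycleE xyr xB) (next_in_cycleE xyr' xB) filter_rr' /= size_rr'.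
  have [yB | yB] := boolP (y \in B).
    have yy' : y = y'.
      apply: cycle_tail_inj; rewrite -?yB_y'B //.
      by case/andP: xyr => /eqP <- _; case/andP: xyr' => /eqP <- _.
    subst y'; apply: IH; rewrite ?(path_sorted xyr) ?(path_sorted xyr') /= ?size_rr' //.
    by move: filter_eq; rewrite /walk_code /= yB /= => ->.
  rewrite -(filter_exit_cycle xyr xB yB) -(filter_exit_cycle xyr' xB) ?filter_rr' //.
  by rewrite -yB_y'B.
case=> <- filter_ww' find_ww' ohead_ww'; congr (_ :: _); apply: IH.
- exact: path_sorted xw.
- exact: path_sorted x'w'.
- exact: size_ww'.
- by rewrite /walk_code filter_ww' find_ww' ohead_ww'.
Qed.

Lemma uniq_filter_off_cycle w : sorted consec w -> uniq (filter [predC B] w).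
Proof.
elim: w => [|a w IH] //= aw; rewrite fun_if /= IH ?(path_sorted aw) // andbT.
case: ifP => // aB; rewrite mem_filter /= aB /=.
by move: aB; apply: contra => aw'; apply/closing_arc_in_cycle/(walk_connect aw).
Qed.

Lemma find_in_cycle_le w : find [in B] w <= size (filter [predC B] w).
Proof. by elim: w => [|a w IH] //=; case: (a \in B). Qed.

Definition walk_codes :=
  [seq (p, o) | p <- [seq (l, i) | l <- seqs_upto #|darc G| (enum (darc G)),
                                   i <- iota 0 #|darc G|.+1],
                o <- enum {: option (darc G)}].

Lemma walk_code_mem w : sorted consec w -> walk_code w \in walk_codes.
Proof.
move=> sw; have size_filter_le : size (filter [predC B] w) <= #|darc G|.
  by rewrite cardT; apply: uniq_leq_size (uniq_filter_off_cycle sw) _ => a; rewrite mem_enum.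
apply: allpairs_f; last by rewrite mem_enum.
apply: allpairs_f; last by rewrite mem_iota /= ltnS (leq_trans (find_in_cycle_le w)).
by apply: mem_seqs_upto => //; apply/allP => a _; rewrite /= mem_enum.
Qed.

Lemma card_iter_line_le k : #|dvert (iter_line k G)| <= maxn #|dvert G| (size walk_codes).
Proof.
case: k => [|k]; first exact: leq_maxl.
apply: leq_trans (leq_maxr _ _).
rewrite cardT -(size_map (walk_code \o walk_of k)); apply: uniq_leq_size.
  rewrite map_inj_uniq ?enum_uniq // => u v /walk_code_inj uv.
  by apply/walk_of_inj/uv; rewrite ?sorted_walk_of ?size_walk_of.
by move=> _ /mapP[v _ ->]; apply/walk_code_mem/sorted_walk_of.
Qed.

End Unicyclic.

Theorem proposition3p1 (G : digraph) :
  ~ strongly_connected G ->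
  (exists (S : {set dvert G}) (B : {set darc G}), [/\ nontriv_scc_sub S B, is_dicycle S B &
     forall (S' : {set dvert G}) (B' : {set darc G}), nontriv_scc_sub S' B' -> S' = S /\ B' = B]) ->
  exists k0 p, 0 < p /\
    forall k, k0 <= k -> inner_diam (iter_line (k + p) G) = inner_diam (iter_line k G).
Proof.
move=> _ [S [B [S_B_scc S_B_cycle S_B_unique]]].
exact: iter_line_diam_periodic (card_iter_line_le S_B_scc S_B_cycle S_B_unique).
Qed.
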